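(* Let $H=(V,E)$ be a loopy graph with $|V|=5$ and $\mathrm{vm}(H)=4$. Then $|E|\le 10$.
   Context: A loopy graph is a finite graph with no isolated vertices and no multiple edges, possibly with loops (a loop counts as one edge). A matching is a set of pairwise vertex-disjoint edges, loops allowed; $\mathrm{vm}(H)$ is the maximum number of vertices touched by a matching of $H$. *)

From mathcomp Require Import all_boot.
Set Implicit Arguments. Unset Strict Implicit. Unset Printing Implicit Defensive.

(* A loopy graph on vertex set T (a finType) is given by its edge set
   E : {set {set T}}: each edge is a set of 1 vertex (a loop) or 2 vertices.
   No multiple edges is automatic (E is a set). *)
Definition loopy_graph (T : finType) (E : {set {set T}}) : Prop :=
  (forall e, e \in E -> #|e| = 1 \/ #|e| = 2) /\
  (forall v : T, exists2 e, e \in E & v \in e).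

Definition matching (T : finType) (E M : {set {set T}}) : bool :=
  (M \subset E) &&
  [forall e in M, forall f in M, (e != f) ==> [disjoint e & f]].

Definition vm (T : finType) (E : {set {set T}}) : nat :=
  \max_(M in powerset E | matching E M) #|cover M|.

From mathcomp Require Import all_boot.
Set Implicit Arguments. Unset Strict Implicit. Unset Printing Implicit Defensive.

(* With at least 11 edges, at most 4 of the 15 possible edges (5 loops and
   10 pairs) are missing.  A missing pair avoids exactly 3 vertices, so summing
   over the vertices carrying a loop yields such a vertex a for which at most 2
   pairs inside the other 4 vertices are missing.  Complementation within those
   4 vertices is an involution on their 6 pairs, and each missing pair spoils at
   most 2 of them, so some pair p and its complement are both edges.  The loop
   at a, p and its complement form a matching covering all 5 vertices,
   contradicting vm = 4. *)

Section LoopyGraph.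

Variables (T : finType) (E : {set {set T}}).

Definition loop_vertices : {set T} := [set a | [set a] \in E].

Definition missing_pairs : {set {set T}} := [set e : {set T} | #|e| == 2] :\: E.

Lemma leq_card_cover_vm (M : {set {set T}}) :
  M \subset E -> trivIset M -> #|cover M| <= vm E.
Proof.
move=> sME /trivIsetP tiM; apply: (leq_bigmax_cond M); rewrite powersetE sME /=.
apply/andP; split=> //; apply/forall_inP=> e eM; apply/forall_inP=> f fM.
exact/implyP/tiM.
Qed.

Lemma leq_card_vm_of_split (a : T) (p : {set T}) :
    p \subset [set~ a] -> [set a] \in E -> p \in E -> [set~ a] :\: p \in E ->
  #|T| <= vm E.
Proof.
move=> pSa aE pE qE; set M := [set [set a]; p; [set~ a] :\: p].
have disj_a_p : [disjoint p & [set a]] by rewrite disjoints_subset.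
have disj_a_q : [disjoint [set~ a] :\: p & [set a]].
  by rewrite disjoints_subset subsetDl.
have [_ disj_q_p] := subsetDP (subxx ([set~ a] :\: p)).
have sME : M \subset E.
  by apply/subsetP=> e; rewrite !inE => /orP[/orP[]|]/eqP->.
have tiM : trivIset M.
  apply/trivIsetP=> e f; rewrite !inE => /orP[/orP[]|]/eqP-> /orP[/orP[]|]/eqP->;
  by rewrite ?eqxx // => _; rewrite 1?disjoint_sym.
have coverM : cover M = setT.
  apply/setP=> x; rewrite inE; apply/bigcupP.
  have [-> | xa] := eqVneq x a; first by exists [set a]; rewrite !inE ?eqxx.
  have [xp | xNp] := boolP (x \in p).
    by exists p; rewrite // !inE eqxx orbT.
  by exists ([set~ a] :\: p); rewrite !inE ?eqxx ?orbT // xNp xa.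
by rewrite -cardsT -coverM leq_card_cover_vm.
Qed.

Lemma card_edges_missing_pairs :
    (forall e, e \in E -> #|e| = 1 \/ #|e| = 2) ->
  #|E| + #|missing_pairs| = #|loop_vertices| + 'C(#|T|, 2).
Proof.
move=> edge_size; set P2 := [set e : {set T} | #|e| == 2].
have loopsE : E :\: P2 = [set [set a] | a in loop_vertices].
  apply/setP=> e; apply/setDP/imsetP => [[eE eN2] | [a aL ->]].
    have /cards1P[a e_a] : #|e| == 1.
      by case: (edge_size e eE) => /eqP // e2; rewrite inE e2 in eN2.
    by exists a; rewrite // inE -e_a.
  by rewrite inE in aL; rewrite inE cards1.
rewrite -(cardsID P2 E) -card_draws -/P2 -(cardsID E P2) loopsE setIC.
by rewrite card_imset; [rewrite addnAC [in RHS]addnC | apply: set1_inj].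
Qed.

Lemma sum_card_missing_pairs_avoiding :
  \sum_a #|[set e in missing_pairs | e \subset [set~ a]]|
    = #|missing_pairs| * (#|T| - 2).
Proof.
rewrite -sum_nat_const.
transitivity (\sum_(e in missing_pairs) \sum_a (if a \notin e then 1 else 0)).
  rewrite exchange_big /=; apply: eq_bigr => a _.
  rewrite -sum1dep_card big_mkcondr /=; apply: eq_bigr => e _.
  by rewrite subsetC sub1set inE.
apply: eq_bigr => e; rewrite !inE => /andP[_ /eqP e2].
by rewrite -big_mkcond sum1dep_card -e2 -(cardsC e) addKn.
Qed.

Lemma exists_loop_vertex_few_missing_pairs :
    2 < #|T| -> #|missing_pairs| < #|loop_vertices| ->
  exists2 a, a \in loop_vertices &
    #|[set e in missing_pairs | e \subset [set~ a]]| < #|T| - 2.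
Proof.
rewrite -subn_gt0 => T_gt2; rewrite -(ltn_pmul2r T_gt2) => ltNL.
apply/exists_inP; apply: contraTT ltNL => /exists_inPn few_missing.
rewrite -leqNgt -sum_card_missing_pairs_avoiding -sum_nat_const.
rewrite [X in _ <= X](bigID (mem loop_vertices)) /=.
rewrite (leq_trans _ (leq_addr _ _)) //.
by apply: leq_sum => a aL; rewrite leqNgt few_missing.
Qed.

Lemma exists_pair_with_complement_edge (S : {set T}) :
    #|S| = 4 -> #|[set e in missing_pairs | e \subset S]| <= 2 ->
  exists2 p : {set T}, p \subset S & (p \in E) && (S :\: p \in E).
Proof.
move=> S4 few_missing; set missS := [set e in missing_pairs | e \subset S].
have : ~~ ([set p : {set T} | p \subset S & #|p| == 2]
           \subset missS :|: [set S :\: q | q in missS]).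
  apply/negP => /subset_leq_card; apply/negP; rewrite -ltnNge cards_draws S4.
  apply: leq_ltn_trans (leq_card_setU _ _) _.
  have few_images : #|[set S :\: q | q in missS]| <= 2.
    exact: leq_trans (leq_imset_card _ _) few_missing.
  by apply: leq_ltn_trans (leq_add few_missing few_images) _.
case/subsetPn => p; rewrite inE => /andP[pS /eqP p2].
rewrite inE negb_or => /andP[pNmiss pNimg].
exists p => //; apply/andP; split.
  by apply: contraR pNmiss => pNE; rewrite !inE pNE p2 pS.
apply: contraR pNimg => qNE; apply/imsetP; exists (S :\: p).
  by rewrite !inE qNE subsetDl cardsDS // S4 p2.
by rewrite setDDr setDv set0U (setIidPr pS).
Qed.

End LoopyGraph.

Theorem proposition5p7 (T : finType) (E : {set {set T}}) :
  loopy_graph E -> #|T| = 5 -> vm E = 4 -> #|E| <= 10.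
Proof.
move=> [edge_size _] T5 vm4; rewrite leqNgt; apply/negP => E_gt10.
have few_missing : #|missing_pairs E| < #|loop_vertices E|.
  have := card_edges_missing_pairs edge_size; rewrite T5 => card_eq.
  by rewrite -(ltn_add2r 10) -card_eq addnC ltn_add2r.
have T_gt2 : 2 < #|T| by rewrite T5.
have [a aL few_missing_a] :=
  exists_loop_vertex_few_missing_pairs T_gt2 few_missing.
rewrite T5 in few_missing_a.
have Sa4 : #|[set~ a]| = 4 by rewrite cardsC1 T5.
have [p pSa /andP[pE qE]] := exists_pair_with_complement_edge Sa4 few_missing_a.
rewrite inE in aL; have := leq_card_vm_of_split pSa aL pE qE.
by rewrite T5 vm4.
Qed.
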